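(* Let $\Delta$ be a pure $d$-dimensional APC simplicial complex, $0\le i<d$, let $\Upsilon$ be an $i$-dimensional spanning tree of $\Delta$ with $\tilde H_{i-1}(\Upsilon;\mathbb{Z})=0$, let $\Theta=\Delta_i\setminus\Upsilon_i$, let $L=L_{\Delta,i}$, and let $\tilde L$ be the submatrix of $L$ with rows and columns indexed by $\Theta$, with entries $\ell_{\theta\sigma}$ defined by $\tilde L\theta=\sum_{\sigma\in\Theta}\ell_{\theta\sigma}\sigma$ for $\theta\in\Theta$. Let $\hat\theta$ ($\theta\in\Theta$) be as follows: choose integers $c_{\sigma\theta}$ ($\sigma\in\Upsilon_i$) with $\partial_{\Delta,i}(\theta)=\sum_{\sigma\in\Upsilon_i}c_{\sigma\theta}\partial_{\Delta,i}(\sigma)$ and set $\hat\theta=\theta-\sum_{\sigma\in\Upsilon_i}c_{\sigma\theta}\sigma$. Then for every $\theta\in\Theta$, $$L\theta=\sum_{\sigma\in\Theta}\ell_{\sigma\theta}\,\hat\sigma.$$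
   Context: For a finite simplicial complex $\Delta$, $\Delta_i$ is its set of $i$-faces, $\Delta_{(i)}$ its $i$-skeleton, $f_i=|\Delta_i|$. $C_i(\Delta;\mathbb{Z})$ is free abelian on the (fixed-orientation) $i$-faces, $\partial_{\Delta,i}$ the simplicial boundary map, $\partial^*_{\Delta,i}$ its transpose, and $L_{\Delta,i}=\partial_{i+1}\partial^*_{i+1}$. $\tilde H$ is reduced homology, $\beta_i=\dim_\mathbb{Q}\tilde H_i(\cdot;\mathbb{Q})$. A pure $d$-dimensional complex is APC if $\tilde H_j(\Delta;\mathbb{Q})=0$ for all $j<d$. For a pure $k$-dimensional complex $\Gamma$, a subcomplex $\Upsilon$ with $\Upsilon_{(k-1)}=\Gamma_{(k-1)}$ is a spanning tree if $\tilde H_k(\Upsilon;\mathbb{Z})=0$, $\tilde H_{k-1}(\Upsilon;\mathbb{Q})=0$, and $f_k(\Upsilon)=f_k(\Gamma)-\beta_k(\Gamma)+\beta_{k-1}(\Gamma)$; an $i$-dimensional spanning tree of $\Delta$ is a spanning tree of $\Delta_{(i)}$. (The existence of the integers $c_{\sigma\theta}$ is guaranteed since $\operatorname{im}\partial_{\Delta,i}=\operatorname{im}\partial_{\Upsilon,i}$ under these hypotheses.) *)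

From HB Require Import structures.
From mathcomp Require Import all_boot all_order all_algebra.
Set Implicit Arguments. Unset Strict Implicit. Unset Printing Implicit Defensive.
Import Order.TTheory GRing.Theory Num.Theory.
Local Open Scope ring_scope.

(* Complexes contain the empty face (augmented chain complex => reduced
   homology).  The fixed orientation of a face is the increasing order of
   its vertices.  Faces are indexed by their size m = dim + 1. *)

Definition is_complex n (D : {set {set 'I_n}}) : Prop :=
  set0 \in D /\ (forall s t : {set 'I_n}, s \in D -> t \subset s -> t \in D).

Definition faces n (G : {set {set 'I_n}}) (m : nat) : {set {set 'I_n}} :=
  [set s in G | #|s| == m].

Definition skelsz n (G : {set {set 'I_n}}) (m : nat) : {set {set 'I_n}} :=
  [set s in G | (#|s| <= m)%N].

Definition inc (R : pzRingType) n (t s : {set 'I_n}) : R :=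
  \sum_(v in s) ((t == s :\ v)%:R * (-1) ^+ #|[set u in s | (val u < val v)%N]|).

Notation chain R n := {ffun {set 'I_n} -> R}.

Definition ech (R : pzRingType) n (s : {set 'I_n}) : chain R n :=
  [ffun t => (t == s)%:R].

Definition bd (R : pzRingType) n (c : chain R n) : chain R n :=
  [ffun t => \sum_s c s * inc R t s].

Definition bdT (R : pzRingType) n (D : {set {set 'I_n}}) (m : nat)
    (c : chain R n) : chain R n :=
  [ffun s => if s \in faces D m then \sum_t inc R t s * c t else 0].

Definition supp_on (R : pzRingType) n (c : chain R n) (A : {set {set 'I_n}}) :=
  forall t, c t != 0 -> t \in A.

(* \tilde H_{m-1}(G; R) = 0 *)
Definition hvanish (R : pzRingType) n (G : {set {set 'I_n}}) (m : nat) : Prop :=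
  forall c : chain R n, supp_on c (faces G m) -> bd c = 0 ->
    exists b : chain R n, supp_on b (faces G m.+1) /\ bd b = c.

Definition bdmx n (G : {set {set 'I_n}}) (m : nat)
    : 'M[rat]_(#|{set 'I_n}|) :=
  \matrix_(a, b) (if enum_val b \in faces G m
                  then inc rat (enum_val a) (enum_val b) else 0).

(* beta_{m-1}(G) = dim ker d_{m-1} - dim im d_m over Q *)
Definition betti n (G : {set {set 'I_n}}) (m : nat) : int :=
  (#|faces G m|)%:Z - (\rank (bdmx G m))%:Z - (\rank (bdmx G m.+1))%:Z.

Definition pure n (D : {set {set 'I_n}}) (d : nat) : Prop :=
  (forall s, s \in D -> (#|s| <= d.+1)%N) /\
  (forall s, s \in D -> exists t, [/\ t \in D, s \subset t & #|t| = d.+1]).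

Definition APC n (D : {set {set 'I_n}}) (d : nat) : Prop :=
  pure D d /\ (forall m : nat, (m <= d)%N -> hvanish rat D m).

Definition spanning_tree n (G : {set {set 'I_n}}) (k : nat)
    (U : {set {set 'I_n}}) : Prop :=
  [/\ is_complex U, U \subset G, skelsz U k = skelsz G k,
      hvanish int U k.+1 &
      hvanish rat U k /\
      (#|faces U k.+1|)%:Z = (#|faces G k.+1|)%:Z - betti G k.+1 + betti G k].

Definition idim_spanning_tree n (D : {set {set 'I_n}}) (i : nat)
    (U : {set {set 'I_n}}) : Prop :=
  spanning_tree (skelsz D i.+1) i U.

(* L_{D,i} = d_{i+1} d^*_{i+1} *)
Definition Lap n (D : {set {set 'I_n}}) (i : nat) (c : chain int n) : chain int n :=
  bd (bdT D i.+2 c).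

Definition Theta n (D U : {set {set 'I_n}}) (i : nat) : {set {set 'I_n}} :=
  faces D i.+1 :\: faces U i.+1.

Definition ell n (D : {set {set 'I_n}}) (i : nat) (x y : {set 'I_n}) : int :=
  Lap D i (ech int x) y.

Definition hat n (U : {set {set 'I_n}}) (i : nat)
    (c : {set 'I_n} -> {set 'I_n} -> int) (x : {set 'I_n}) : chain int n :=
  [ffun t => ech int x t - \sum_(s in faces U i.+1) c s x * ech int s t].

From HB Require Import structures.
From mathcomp Require Import all_boot all_order all_algebra.
Import Order.TTheory GRing.Theory Num.Theory.
Set Implicit Arguments. Unset Strict Implicit. Unset Printing Implicit Defensive.
Local Open Scope ring_scope.

(* Put X := L theta - sum_(sigma in Theta) ell(sigma, theta) hat sigma.  Since each hat sigma
   is sigma plus a combination of faces of Upsilon and L is symmetric, the coefficient of X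
   on every face outside Upsilon vanishes, so X is an i-chain of Upsilon.  It is a cycle,
   because L theta is a boundary and every hat sigma is a cycle by the choice of the c's.
   As Upsilon has no (i+1)-faces, H_i(Upsilon; Z) = 0 forces X = 0. *)

Lemma sum_antisym_eq0 (R : numDomainType) (I : finType) (F : I -> I -> R) :
  (forall v w, F v w = - F w v) -> \sum_v \sum_w F v w = 0.
Proof.
move=> Fanti; set S := \sum_v _.
have S_opp : S = - S.
  by rewrite {1}/S exchange_big -sumrN; apply: eq_bigr => v _;
     rewrite -sumrN; apply: eq_bigr => w _; exact: Fanti.
have : S *+ 2 == 0 by rewrite mulr2n {1}S_opp addNr.
by rewrite mulrn_eq0 => /eqP.
Qed.

(* The sign exponent of vertex [v] in the incidence numbers [inc _ (u :\ v) u]. *)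
Definition nbelow n (u : {set 'I_n}) (v : 'I_n) := #|[set x in u | (val x < val v)%N]|.

Lemma nbelowD1_lt n (u : {set 'I_n}) v w :
  (val v < val w)%N -> nbelow (u :\ w) v = nbelow u v.
Proof.
move=> lt_vw; apply: eq_card => x; rewrite !inE.
case: (ltnP (val x) (val v)) => lt_xv; last by rewrite !andbF.
rewrite !andbT andb_idl // => _; apply: contraTneq lt_xv => ->.
by rewrite -leqNgt ltnW.
Qed.

Lemma nbelowD1_gt n (u : {set 'I_n}) v w : v \in u ->
  (val v < val w)%N -> (nbelow (u :\ v) w).+1 = nbelow u w.
Proof.
move=> vu lt_vw; rewrite /nbelow.
have -> : [set x in u | (val x < val w)%N] =
          v |: [set x in u :\ v | (val x < val w)%N].
  by apply/setP => x; rewrite !inE; case: eqVneq => [->|] //=; rewrite vu lt_vw.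
by rewrite cardsU1 !inE eqxx.
Qed.

Lemma sign_nbelow_swap n (u : {set 'I_n}) v w : v \in u -> (val v < val w)%N ->
  (-1) ^+ nbelow u v * (-1) ^+ nbelow (u :\ v) w =
  - ((-1) ^+ nbelow u w * (-1) ^+ nbelow (u :\ w) v) :> int.
Proof.
move=> vu lt_vw; rewrite (nbelowD1_lt u lt_vw) -(nbelowD1_gt vu lt_vw) exprS.
by rewrite mulN1r mulNr opprK mulrC.
Qed.

Lemma sum_eq1_mul (R : pzRingType) n (F : {set 'I_n} -> R) a :
  \sum_s (s == a)%:R * F s = F a.
Proof.
rewrite (bigD1 a) //= eqxx mul1r big1 ?addr0 // => s /negbTE ->.
by rewrite mul0r.
Qed.

Lemma sum_mul_eq1 (R : comPzRingType) n (F : {set 'I_n} -> R) a :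
  \sum_s F s * (s == a)%:R = F a.
Proof. by rewrite -(sum_eq1_mul F a); apply: eq_bigr => s _; rewrite mulrC. Qed.

Lemma sum_in_mul_eq1 (R : pzRingType) n (A : {pred {set 'I_n}}) (F : {set 'I_n} -> R) a :
  \sum_(s in A) F s * (a == s)%:R = if a \in A then F a else 0.
Proof.
rewrite big_mkcond (bigD1 a) //= eqxx mulr1 big1 ?addr0 // => s /negbTE sa.
by rewrite eq_sym sa mulr0 if_same.
Qed.

Lemma sum_inc_inc n (t u : {set 'I_n}) : \sum_s inc int s u * inc int t s = 0.
Proof.
under eq_bigr => s _ do rewrite {1}/inc mulr_suml.
rewrite exchange_big /=.
rewrite (eq_bigr (fun v => (-1) ^+ nbelow u v * inc int t (u :\ v))); last first.
  by move=> v _; under eq_bigr => s _ do rewrite -mulrA; rewrite sum_eq1_mul.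
rewrite /inc; under eq_bigr => v _ do rewrite mulr_sumr.
set f := fun v w => (t == u :\ v :\ w)%:R *
  ((-1) ^+ nbelow u v * (-1) ^+ nbelow (u :\ v) w) : int.
transitivity (\sum_v \sum_w
    (if (v \in u) && (w \in u :\ v) then f v w else 0)).
  rewrite big_mkcond /=; apply: eq_bigr => v _.
  case: (boolP (v \in u)) => vu /=; last by rewrite big1.
  rewrite big_mkcond /=; apply: eq_bigr => w _.
  by case: (w \in u :\ v) => //; rewrite /f mulrCA.
(* Deleting v then w, or w then v, gives the same face with opposite signs. *)
apply: sum_antisym_eq0 => v w; rewrite !inE.
case: (eqVneq w v) => [->|nwv]; first by rewrite /= andbF oppr0.
case vu: (v \in u); case wu: (w \in u) => /=; rewrite ?oppr0 //.
rewrite /f [u :\ w :\ v]setDDl setUC -setDDl -mulrN; congr (_ * _).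
have : val v != val w by apply: contra nwv => /eqP/val_inj ->.
rewrite neq_ltn => /orP [] lt; first by rewrite sign_nbelow_swap.
by rewrite (sign_nbelow_swap wu lt) opprK.
Qed.

Lemma bd_bd n (x : chain int n) : bd (bd x) = 0.
Proof.
apply/ffunP => t; rewrite !ffunE.
under eq_bigr => s _ do rewrite ffunE mulr_suml.
rewrite exchange_big /= big1 // => u _.
under eq_bigr => s _ do rewrite -mulrA.
by rewrite -mulr_sumr sum_inc_inc mulr0.
Qed.

Lemma bdB n (x y : chain int n) : bd (x - y) = bd x - bd y.
Proof.
apply/ffunP => t; rewrite !ffunE -sumrB.
by apply: eq_bigr => s _; rewrite !ffunE mulrBl.
Qed.

Lemma bd_lincomb n (A : {set {set 'I_n}}) (a : {set 'I_n} -> int)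
    (f : {set 'I_n} -> chain int n) :
  bd [ffun t => \sum_(s in A) a s * f s t] =
  [ffun t => \sum_(s in A) a s * bd (f s) t].
Proof.
apply/ffunP => t; rewrite !ffunE.
under eq_bigr => r _ do rewrite ffunE mulr_suml.
rewrite exchange_big /=; apply: eq_bigr => s _.
by rewrite ffunE mulr_sumr; apply: eq_bigr => r _; rewrite mulrA.
Qed.

Lemma Lap_ech n (D : {set {set 'I_n}}) i x y : Lap D i (ech int x) y =
  \sum_s (if s \in faces D i.+2 then inc int x s * inc int y s else 0).
Proof.
rewrite /Lap /bd ffunE; apply: eq_bigr => s _; rewrite /bdT ffunE.
case: (s \in faces D i.+2); last by rewrite mul0r.
congr (_ * _); rewrite -(sum_mul_eq1 (fun t => inc int t s) x).
by apply: eq_bigr => t _; rewrite ffunE.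
Qed.

Lemma ell_sym n (D : {set {set 'I_n}}) i x y : ell D i x y = ell D i y x.
Proof. by rewrite /ell !Lap_ech; apply: eq_bigr => s _; case: ifP; rewrite // mulrC. Qed.

Lemma inc_neq0 n (t s : {set 'I_n}) :
  inc int t s != 0 -> exists2 v, v \in s & t = s :\ v.
Proof.
case: (boolP [exists v in s, t == s :\ v]) => [/exists_inP [v vs /eqP ->]|]; first by exists v.
move/exists_inP => tNface /eqP []; apply: big1 => v vs.
by case: eqVneq => [tsv|]; [case: tNface; exists v => //; apply/eqP | rewrite mul0r].
Qed.

Lemma Lap_supp n (D : {set {set 'I_n}}) i c t : is_complex D ->
  Lap D i c t != 0 -> t \in faces D i.+1.
Proof.
move=> [_ D_closed]; rewrite /Lap /bd ffunE => Lt_neq0.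
have /existsP [s] : [exists s, bdT D i.+2 c s * inc int t s != 0].
  apply: contraNT Lt_neq0 => /existsPn all0; apply/eqP/big1 => s _.
  by apply/eqP; rewrite -[_ == 0]negbK all0.
rewrite mulf_eq0 negb_or => /andP [bdT_neq0 /inc_neq0 [v vs ->]].
have : s \in faces D i.+2.
  by apply: contraNT bdT_neq0; rewrite /bdT ffunE => /negbTE ->.
rewrite !inE => /andP [sD /eqP card_s]; apply/andP; split.
  exact: D_closed sD (subD1set s v).
by move: card_s; rewrite (cardsD1 v) vs add1n => -[->].
Qed.

Lemma faces_succ_eq0 n (G U : {set {set 'I_n}}) m :
  U \subset skelsz G m -> faces U m.+1 = set0.
Proof.
move=> /subsetP UG; apply/setP => s; rewrite !inE.
apply/negbTE; apply/andP => -[/UG]; rewrite inE => /andP [_ + /eqP card_s].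
by rewrite card_s ltnn.
Qed.

Lemma cycle_eq0 n (U : {set {set 'I_n}}) m (x : chain int n) :
  hvanish int U m -> faces U m.+1 = set0 ->
  supp_on x (faces U m) -> bd x = 0 -> x = 0.
Proof.
move=> Hm no_faces x_supp x_cycle; have [b [b_supp <-]] := Hm x x_supp x_cycle.
have -> : b = 0.
  by apply/ffunP => t; rewrite ffunE; apply/eqP/negP => /negP/b_supp; rewrite no_faces inE.
by apply/ffunP => t; rewrite !ffunE big1 // => s _; rewrite ffunE mul0r.
Qed.

Lemma hatE n (U : {set {set 'I_n}}) i c th :
  hat U i c th = ech int th - [ffun t => \sum_(s in faces U i.+1) c s th * ech int s t].
Proof. by apply/ffunP => t; rewrite !ffunE. Qed.

Lemma hat_notin n (U : {set {set 'I_n}}) i c th t : t \notin faces U i.+1 ->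
  hat U i c th t = ech int th t.
Proof.
move=> tNU; rewrite ffunE big1 ?subr0 // => s sU; rewrite ffunE.
have /negbTE -> : t != s by apply: contraNneq tNU => ->.
by rewrite mulr0.
Qed.

Lemma bd_hat n (U : {set {set 'I_n}}) i c th :
  bd (ech int th) = [ffun t => \sum_(s in faces U i.+1) c s th * bd (ech int s) t] ->
  bd (hat U i c th) = 0.
Proof. by move=> bd_th; rewrite hatE bdB bd_lincomb -bd_th subrr. Qed.

Section LaplacianResidual.

Variables (n : nat) (D U : {set {set 'I_n}}) (i : nat).
Variables (c : {set 'I_n} -> {set 'I_n} -> int) (th : {set 'I_n}).

Let residual := Lap D i (ech int th) -
  [ffun t => \sum_(s in Theta D U i) ell D i s th * hat U i c s t].

Lemma residual_supp : is_complex D -> supp_on residual (faces U i.+1).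
Proof.
move=> D_complex t; apply: contraNT => tNU; rewrite ffunE [X in _ + X]ffunE [X in - X]ffunE.
under eq_bigr => s _ do rewrite hat_notin // ffunE.
rewrite sum_in_mul_eq1; case: ifPn => tT.
  by rewrite -/(ell D i th t) ell_sym subrr.
rewrite subr0; apply: contraNT tT => /(Lap_supp D_complex) tD.
by rewrite inE tD tNU.
Qed.

Lemma residual_cycle : (forall s, s \in Theta D U i ->
     bd (ech int s) = [ffun t => \sum_(r in faces U i.+1) c r s * bd (ech int r) t]) ->
  bd residual = 0.
Proof.
move=> bd_Theta; rewrite bdB bd_lincomb /Lap bd_bd sub0r.
apply/eqP; rewrite oppr_eq0; apply/eqP/ffunP => t; rewrite !ffunE big1 // => s sT.
by rewrite bd_hat ?ffunE ?mulr0 // bd_Theta.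
Qed.

End LaplacianResidual.

Theorem claim6 (n : nat) (D : {set {set 'I_n}}) (d i : nat)
    (U : {set {set 'I_n}}) (c : {set 'I_n} -> {set 'I_n} -> int) :
  is_complex D -> APC D d -> (i < d)%N ->
  idim_spanning_tree D i U -> hvanish int U i ->
  (forall th, th \in Theta D U i ->
     bd (ech int th) =
       [ffun t => \sum_(s in faces U i.+1) c s th * bd (ech int s) t]) ->
  forall th, th \in Theta D U i ->
    Lap D i (ech int th) =
      [ffun t => \sum_(s in Theta D U i) ell D i s th * hat U i c s t].
Proof.
(* Neither APC, nor i < d, nor H_{i-1}(U; Z) = 0, nor th \in Theta is needed. *)
move=> D_complex _ _ [_ U_skel _ H_i _] _ bd_Theta th _.
apply/eqP; rewrite -subr_eq0; apply/eqP/(cycle_eq0 H_i).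
- exact: faces_succ_eq0 U_skel.
- exact: residual_supp.
- exact: residual_cycle.
Qed.
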